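(* Let $G$, $z$, $g_1,\dots,g_{2r}$, $S=\{g_1,\dots,g_{2r}\}$ and $\Gamma=\mathrm{Cay}(G,S)$ be as in the context. Then $\Gamma$ is $2$-arc-transitive; more precisely, the group $\hat G\rtimes\tilde S_{2r}\le\mathrm{Aut}(\Gamma)$ acts transitively on the $2$-arcs of $\Gamma$, where $\tilde S_{2r}=\{\tilde\sigma:\sigma\in S_{2r}\}$ is the group of automorphisms of $G$ with $g_i^{\tilde\sigma}=g_{i^\sigma}$ and $z^{\tilde\sigma}=z$, which fixes the vertex $1$ and acts on $S$ as the full symmetric group.
   Context: Let $r\ge1$ and $G$ an extraspecial $2$-group of order $2^{2r+1}$ (i.e. $|Z(G)|=2$, $G/Z(G)\cong\mathbb{Z}_2^{2r}$), $Z=Z(G)=\langle z\rangle$ identified with $\mathbb{F}_2$, and $G/Z$ equipped with the quadratic form $Q(Zx)=x^2$ and bilinear form $B(Zx,Zy)=[x,y]$. Assume $\{Zg_1,\dots,Zg_{2r}\}$ is a symmetric basis of $G/Z$ ($Q(Zg_i)=0$, $B(Zg_i,Zg_j)=1$ for $i\ne j$), so $g_i^2=1$ and $[g_i,g_j]=z$ for $i\neq j$. $\mathrm{Cay}(G,S)$ has vertex set $G$ and edges $\{x,sx\}$, $x\in G$, $s\in S$; $\hat G$ is the group of right multiplications $x\mapsto xg$. A $2$-arc is a triple $(u,v,w)$ with $u\sim v\sim w$ and $u\ne w$. *)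

From mathcomp Require Import all_boot all_fingroup all_solvable.
Set Implicit Arguments. Unset Strict Implicit. Unset Printing Implicit Defensive.
Local Open Scope group_scope.

(* Cayley graph Cay(G,S): vertex set G, edges {x, s x} for x in G, s in S.
   Adjacency x ~ y  iff  y = s x for some s in S, i.e. y * x^-1 \in S. *)
Definition cay_adj (gT : finGroupType) (S : {set gT}) (x y : gT) : bool :=
  (y * x^-1) \in S.

Definition two_arc (gT : finGroupType) (G S : {set gT}) (u v w : gT) : bool :=
  [&& u \in G, v \in G, w \in G, cay_adj S u v, cay_adj S v w & u != w].

(* G/Z is a quadratic space over F_2 with B(Zx, Zy) = [x, y], and it suffices
   to lift each transposition (a b) of the symmetric basis.  With d = g_a g_b
   we have d^2 = z, so x |-> x d^B(x,d) lifts the orthogonal reflection in Zd: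
   it is an automorphism of G sending g_a to g_b, g_b to g_a z and fixing the
   other g_k.  Conjugation by the product of the g_k, k <> a, which commutes
   with every g_k but g_a because 2r is even, removes the factor z.  Every
   2-arc has the form (u, g_a u, g_b g_a u) with a <> b, and the lift of a
   permutation sending a, b to a', b', followed by a right translation, maps
   it to any other 2-arc (u', g_a' u', g_b' g_a' u'). *)

From mathcomp Require Import all_boot all_fingroup all_solvable.
From mathcomp Require Import zify.

Set Implicit Arguments.
Unset Strict Implicit.
Unset Printing Implicit Defensive.

Local Open Scope group_scope.

Section InjectiveMorphism.

Variables (gT : finGroupType) (G : {group gT}) (f : gT -> gT).
Hypotheses (fG : {in G, forall x, f x \in G}) (f_inj : {in G &, injective f})
           (fM : {in G &, {morph f : x y / x * y}}).

Lemma injective_morph_in_Aut : exists2 a, a \in Aut G & {in G, a =1 f}.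
Proof.
have sfG : f @: G \subset G by apply/subsetP => _ /imsetP[x Gx ->]; apply: fG.
exists (perm_in f_inj sfG); last exact: perm_inE.
rewrite inE perm_in_on; apply/morphicP => x y Gx Gy.
by rewrite !perm_inE ?groupM ?fM.
Qed.

End InjectiveMorphism.

Section CayleyGraph.

Variables (gT : finGroupType) (G : {group gT}).

Lemma Aut_rmul_onto f h : f \in Aut G -> h \in G -> [set f x * h | x in G] = G.
Proof.
move=> Af Gh; apply/eqP; rewrite eqEcard card_in_imset => [|x y _ _ /mulIg/perm_inj //].
rewrite leqnn andbT; apply/subsetP => _ /imsetP[x Gx ->].
by rewrite groupM ?Aut_closed.
Qed.

Lemma cay_adj_Aut_rmul (S : {set gT}) f h : f \in Aut G -> f @: S = S ->
  {in G &, forall x y, cay_adj S (f x * h) (f y * h) = cay_adj S x y}.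
Proof.
move=> Af fS x y Gx Gy; have fM := morphicP (Aut_morphic Af).
have fV : (f x)^-1 = f x^-1 by rewrite -(autmE Af) morphV.
rewrite /cay_adj invMg mulgA mulgK fV -fM ?groupV //.
by rewrite -[in LHS]fS mem_imset //; apply: perm_inj.
Qed.

Lemma two_arc_gens (I : finType) (g : I -> gT) u v w :
  (forall i, g i ^+ 2 = 1) -> two_arc G [set g i | i : I] u v w ->
  exists a b, [/\ a != b, u \in G, v = g a * u & w = g b * v].
Proof.
move=> g2 /and5P[Gu _ _ /imsetP[a _ ea] /andP[/imsetP[b _ eb] uw]].
have ev : v = g a * u by rewrite -ea mulgKV.
have ew : w = g b * v by rewrite -eb mulgKV.
exists a, b; split=> //; apply: contraNneq uw => ab.
by rewrite ew ev ab mulgA -expg2 g2 mul1g.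
Qed.

End CayleyGraph.

Lemma perm_pair_transitive (T : finType) (a b a' b' : T) :
  a != b -> a' != b' -> exists s : {perm T}, s a = a' /\ s b = b'.
Proof.
move=> ab ab'; set c := tperm a a' b.
have ca' : c != a' by rewrite /c -[X in _ != X](tpermL a a') (inj_eq perm_inj) eq_sym.
exists (tperm a a' * tperm c b'); rewrite !permM tpermL -/c tpermL tpermD //.
by rewrite eq_sym.
Qed.

Lemma conjg_center (gT : finGroupType) (G : {group gT}) c x :
  c \in 'Z(G) -> x \in G -> c ^ x = c.
Proof. by move=> Zc Gx; apply/conjg_fixP/commgP; exact: commute_sym (centerC Gx Zc). Qed.

Section CentralCommutators.

Variables (gT : finGroupType) (G : {group gT}) (z : gT).
Hypotheses (Zz : z \in 'Z(G)) (oz : #[z] = 2) (G'z : G^`(1) \subset <[z]>).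

Lemma commg_eq1_or_z x y : x \in G -> y \in G -> [~ x, y] = 1 \/ [~ x, y] = z.
Proof.
by move=> Gx Gy; apply/set2P; rewrite -cycle2g // (subsetP G'z) // derg1 mem_commg.
Qed.

Lemma commg_center x y : x \in G -> y \in G -> [~ x, y] \in 'Z(G).
Proof. by move=> Gx Gy; case: (commg_eq1_or_z Gx Gy) => ->; rewrite ?group1. Qed.

Lemma commMg_center x y w : x \in G -> y \in G -> w \in G ->
  [~ x * y, w] = [~ x, w] * [~ y, w].
Proof.
by move=> Gx Gy Gw; rewrite commMgJ (conjg_center (commg_center Gx Gw) Gy).
Qed.

Lemma commgM_center x y w : x \in G -> y \in G -> w \in G ->
  [~ x, y * w] = [~ x, y] * [~ x, w].
Proof.
move=> Gx Gy Gw; have Zxy := commg_center Gx Gy.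
rewrite commgMJ (conjg_center Zxy Gw).
by rewrite (centerC (subsetP (center_sub G) _ Zxy) (commg_center Gx Gw)).
Qed.

Lemma commg_prod x (I : finType) (P : pred I) (F : I -> gT) :
  x \in G -> (forall i, F i \in G) ->
  [~ x, \prod_(i | P i) F i] = \prod_(i | P i) [~ x, F i].
Proof.
move=> Gx GF.
have cxM : {in G &, {morph commg x : y w / y * w}}.
  by move=> y w Gy Gw; apply: commgM_center.
exact: (big_morph_in _ _ (@groupM _ G) (group1 G) cxM (commg1 x)).
Qed.

Lemma z_mulzz : z * z = 1.
Proof. by rewrite -expg2 -oz expg_order. Qed.

Lemma z_neq1 : z != 1.
Proof. by rewrite -order_eq1 oz. Qed.

Lemma invg_z : z^-1 = z.
Proof. by apply/eqP; rewrite eq_invg_mul z_mulzz. Qed.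

Definition reflection (d x : gT) := if [~ x, d] == 1 then x else x * d.

Section Reflection.

Variable d : gT.
Hypotheses (Gd : d \in G) (dd : d * d = z).

Lemma reflection_in x : x \in G -> reflection d x \in G.
Proof. by move=> Gx; rewrite /reflection; case: ifP; rewrite ?groupM. Qed.

Lemma commg_reflection x : x \in G -> [~ reflection d x, d] = [~ x, d].
Proof.
move=> Gx; rewrite /reflection; case: ifP => // _.
by rewrite commMg_center // commgg mulg1.
Qed.

Lemma reflection_inj : {in G &, injective (reflection d)}.
Proof.
move=> x y Gx Gy rxy.
have cxy : [~ x, d] = [~ y, d] by rewrite -commg_reflection // rxy commg_reflection.
by move: rxy; rewrite /reflection cxy; case: ifP => // _; apply: mulIg.
Qed.

Lemma reflection_morph : {in G &, {morph reflection d : x y / x * y}}.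
Proof.
move=> x y Gx Gy; rewrite /reflection commMg_center //.
have zF := negbTE z_neq1.
case: (commg_eq1_or_z Gx Gd) => ->; case: (commg_eq1_or_z Gy Gd) => cyd;
  rewrite cyd ?mul1g ?mulg1 ?eqxx ?zF ?z_mulzz ?eqxx ?mulgA //.
- by rewrite -!mulgA (commgP (introT eqP cyd)).
(* x d y d = x y d^2 [d, y] = x y z z *)
- rewrite -(mulgA x d y) (commgC d y) -invg_comm cyd invg_z !mulgA.
  by rewrite -(mulgA _ z d) -(centerC Gd Zz) !mulgA -(mulgA _ d d) dd -mulgA z_mulzz mulg1.
Qed.

End Reflection.

Section SymmetricBasis.

Variables (n : nat) (g : 'I_n -> gT).
Hypotheses (n_even : ~~ odd n) (Gg : forall i, g i \in G)
  (g2 : forall i, g i ^+ 2 = 1) (gC : forall i j, i != j -> [~ g i, g j] = z).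

Lemma mulg_gg k : g k * g k = 1.
Proof. by rewrite -expg2 g2. Qed.

Lemma commg_prod_neq a j :
  [~ g j, \prod_(k | k != a) g k] = if j == a then z else 1.
Proof.
rewrite commg_prod // big_mkcond.
rewrite (eq_bigr (fun k => if (k != a) && (k != j) then z else 1)) => [|k _]; last first.
  by case: (k != a) => //=; case: (eqVneq j k) => [->|/gC->]; rewrite ?commgg.
rewrite -big_mkcond prodg_const -expg_mod_order oz.
have n2 : n %% 2 = 0 by rewrite modn2 (negbTE n_even).
have n_gt0 : 0 < n by case: (n) a => [[]|].
rewrite (eq_card (B := [predD1 predC1 a & j])) => [|i]; last first.
  by rewrite !unfold_in /= andbC.
have := cardD1 j (predC1 a); rewrite cardC1 card_ord !inE.
set c := #|_| => cardD.
case: (eqVneq j a) cardD => _ /= cardD.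
  by have -> : (c %% 2 = 1)%N by lia.
by have -> : (c %% 2 = 0)%N by lia.
Qed.

Lemma conjg_prod_neq a j :
  g j ^ (\prod_(k | k != a) g k) = g j * (if j == a then z else 1).
Proof. by rewrite conjg_mulR commg_prod_neq. Qed.

Lemma reflection_gen a b i : a != b ->
  reflection (g a * g b) (g i) = g (tperm a b i) * (if i == b then z else 1).
Proof.
move=> ab; have ba : b != a by rewrite eq_sym.
have zF := negbTE z_neq1.
rewrite /reflection commgM_center //.
case: tpermP => [->|->|/eqP ia /eqP ib].
- by rewrite commgg gC // mul1g zF (negbTE ab) mulgA mulg_gg !mul1g mulg1.
- rewrite gC // commgg mulg1 zF eqxx mulgA (commgC (g b)) gC //.
  by rewrite -(mulgA _ z) -(centerC (Gg b) Zz) mulgA -(mulgA (g a)) mulg_gg mulg1.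
- by rewrite !gC // z_mulzz eqxx (negbTE ib) mulg1.
Qed.

Definition lifts_perm (f : {perm gT}) (s : 'S_n) :=
  (forall i, f (g i) = g (s i)) /\ f z = z.

Lemma lifts_perm1 : lifts_perm 1 1.
Proof. by split=> [i|]; rewrite !perm1. Qed.

Lemma lifts_permM f1 f2 s1 s2 :
  lifts_perm f1 s1 -> lifts_perm f2 s2 -> lifts_perm (f1 * f2) (s1 * s2).
Proof. by move=> [f1g f1z] [f2g f2z]; split=> [i|]; rewrite !permM ?f1g ?f2g ?f1z. Qed.

Lemma lifts_tperm a b : a != b -> exists2 f, f \in Aut G & lifts_perm f (tperm a b).
Proof.
move=> ab; set d := g a * g b; set y := \prod_(k | k != a) g k.
have Gd : d \in G by rewrite groupM.
have dd : d * d = z.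
  rewrite /d mulgA -(mulgA _ (g b)) (commgC (g b)) gC 1?eq_sym // !mulgA mulg_gg mul1g.
  by rewrite -(mulgA _ z) -(centerC (Gg b) Zz) mulgA mulg_gg mul1g.
have [rho Arho rhoE] := injective_morph_in_Aut (reflection_in Gd)
  (reflection_inj Gd) (reflection_morph Gd dd).
have Gy : y \in G by apply: group_prod => k _.
exists (rho * conj_aut G y); first by rewrite groupM ?Aut_aut.
have Gz : z \in G := subsetP (center_sub G) z Zz.
split=> [i|]; rewrite permM rhoE ?conj_autE ?reflection_in //.
  have tpermE : (tperm a b i == a) = (i == b).
    by rewrite -[X in _ == X](tpermR a b) (inj_eq perm_inj).
  rewrite reflection_gen // conjMg conjg_prod_neq tpermE.
  by case: (i == b); rewrite ?conj1g ?mulg1 // (conjg_center Zz Gy) -mulgA z_mulzz mulg1.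
have cdz : [~ z, d] == 1 by apply/commgP; exact: commute_sym (centerC Gd Zz).
by rewrite /reflection cdz (conjg_center Zz Gy).
Qed.

Lemma lifts_perm_Aut s : exists2 f, f \in Aut G & lifts_perm f s.
Proof.
case: (prod_tpermP s) => ts -> {s}; elim: ts => [_|[a b] ts IH /andP[/= ab]].
  by exists 1; rewrite ?group1 // big_nil; exact: lifts_perm1.
move=> /IH[f2 Af2 f2s]; have [f1 Af1 f1s] := lifts_tperm ab.
by exists (f1 * f2); rewrite ?groupM // big_cons; exact: lifts_permM.
Qed.

Lemma lifts_perm_gens f s :
  lifts_perm f s -> f @: [set g i | i : 'I_n] = [set g i | i : 'I_n].
Proof.
move=> [fg _]; rewrite -imset_comp; apply/setP=> x.
apply/imsetP/imsetP => [[i _ ->] | [i _ ->]]; first by exists (s i); rewrite //= fg.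
by exists (s^-1 i); rewrite //= fg permKV.
Qed.

Lemma lifts_two_arc_transitive u v w u' v' w' :
    two_arc G [set g i | i : 'I_n] u v w -> two_arc G [set g i | i : 'I_n] u' v' w' ->
  exists s f h, [/\ f \in Aut G, lifts_perm f s, h \in G &
                   [/\ f u * h = u', f v * h = v' & f w * h = w']].
Proof.
move=> /(two_arc_gens g2)[a [b [ab Gu -> ->]]].
move=> /(two_arc_gens g2)[a' [b' [ab' Gu' -> ->]]].
have [s [sa sb]] := perm_pair_transitive ab ab'.
have [f Af [fg fz]] := lifts_perm_Aut s.
have fM := morphicP (Aut_morphic Af).
exists s, f, ((f u)^-1 * u'); split=> //; first by rewrite groupM ?groupV ?Aut_closed.
have fuh : f u * ((f u)^-1 * u') = u' by rewrite mulKVg.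
by split; rewrite ?fM ?groupM // ?fg ?sa ?sb -?mulgA fuh.
Qed.

End SymmetricBasis.

End CentralCommutators.

Theorem theorem4p2 (gT : finGroupType) (G : {group gT}) (r : nat)
  (z : gT) (g : 'I_(r.*2) -> gT) :
  (1 <= r)%N ->
  2.-group G -> extraspecial G -> #|G| = (2 ^ (r.*2).+1)%N ->
  'Z(G) = <[z]> ->
  (forall i, g i \in G) ->
  <<[set coset 'Z(G) (g i) | i : 'I_(r.*2)]>> = G / 'Z(G) ->
  (forall i, g i ^+ 2 = 1) ->
  (forall i j, i != j -> [~ g i, g j] = z) ->
  let S := [set g i | i : 'I_(r.*2)] in
  (forall sigma : 'S_(r.*2), exists2 f : {perm gT}, f \in Aut G &
       (forall i, f (g i) = g (sigma i)) /\ f z = z)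
  /\
  (forall (sigma : 'S_(r.*2)) (f : {perm gT}) (h : gT),
       f \in Aut G -> (forall i, f (g i) = g (sigma i)) -> f z = z -> h \in G ->
       [set f x * h | x in G] = G /\
       {in G &, injective (fun x => f x * h)} /\
       {in G &, forall x y, cay_adj S (f x * h) (f y * h) = cay_adj S x y})
  /\
  (forall u v w u' v' w', two_arc G S u v w -> two_arc G S u' v' w' ->
     exists sigma : 'S_(r.*2), exists f : {perm gT}, exists h : gT,
       [/\ f \in Aut G, (forall i, f (g i) = g (sigma i)), f z = z, h \in G &
           [/\ f u * h = u', f v * h = v' & f w * h = w']]).
Proof.
move=> _ pG esG _ ZG Gg _ g2 gC S.
have Zz : z \in 'Z(G) by rewrite ZG cycle_id.
have oz : #[z] = 2 by rewrite /order -ZG (card_center_extraspecial pG esG).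
have G'z : G^`(1) \subset <[z]> by case: esG => [[_ ->] _]; rewrite ZG.
have n_even : ~~ odd r.*2 by rewrite odd_double.
split; first exact: (lifts_perm_Aut Zz oz G'z n_even Gg g2 gC).
split=> [sigma f h Af fg fz Gh | u v w u' v' w' arc arc'].
  split; first exact: Aut_rmul_onto.
  split; first by move=> x y _ _ /mulIg/perm_inj.
  exact: cay_adj_Aut_rmul Af (lifts_perm_gens (conj fg fz)).
have [s [f [h [Af [fg fz] Gh fuvw]]]] :=
  lifts_two_arc_transitive Zz oz G'z n_even Gg g2 gC arc arc'.
by exists s, f, h.
Qed.
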